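(* Let $c\in\mathbb{R}^n$, and suppose $S(A,b)\neq\emptyset$. Let $e^*\in E$ be such that $\underline{X}(e^* )\in S(A,b)$ and $\underline{X}(e^* )$ minimizes $Z_1(x)=\sum_{j\in J}c^+_jx_j$ over $S(A,b)$, where $c^+_j=\max\{c_j,0\}$. Define $x^*\in[0,1]^n$ by $x^*_j=\bar X_j$ if $c_j<0$ and $x^*_j=\underline{X}(e^* )_j$ if $c_j\ge0$. Then $\sum_{j\in J}c_jx^*_j\le\sum_{j\in J}c_jx_j$ for every $x\in S(A,b)$.
   Context: Let $\lambda>0$. The Aczel–Alsina t-norm is $T^{\lambda}_{AA}:[0,1]^2\to[0,1]$, $T^{\lambda}_{AA}(a,x)=0$ if $a=0$ or $x=0$, and $T^{\lambda}_{AA}(a,x)=\exp\!\left(-\left[(-\ln a)^{\lambda}+(-\ln x)^{\lambda}\right]^{1/\lambda}\right)$ otherwise. Let $I=\{1,\dots,m\}$, $J=\{1,\dots,n\}$, $A=(a_{ij})$ with $a_{ij}\in[0,1]$, and $b=(b_i)_{i\in I}$ with $b_i\in[0,1]$. $S(A,b)=\{x\in[0,1]^n: \max_{j\in J} T^{\lambda}_{AA}(a_{ij},x_j)=b_i \text{ for all } i\in I\}$. For each $i\in I$, $J_i=\{j\in J: a_{ij}\ge b_i\}$. For $i\in I$ define $\hat x_i\in[0,1]^n$ by: for $k\in J_i$ with $b_i\neq 0$, $(\hat x_i)_k=\exp\!\left(-\left[(-\ln b_i)^{\lambda}-(-\ln a_{ik})^{\lambda}\right]^{1/\lambda}\right)$;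 for $k\in J_i$ with $a_{ik}>b_i=0$, $(\hat x_i)_k=0$; for $k\in J_i$ with $a_{ik}=b_i=0$, $(\hat x_i)_k=1$; for $k\notin J_i$, $(\hat x_i)_k=1$. Let $\bar X\in[0,1]^n$ be the componentwise minimum $\bar X_k=\min_{i\in I}(\hat x_i)_k$. For $i\in I$ and $j\in J_i$ define $\check x_i(j)\in[0,1]^n$ by $\check x_i(j)_k=\exp\!\left(-\left[(-\ln b_i)^{\lambda}-(-\ln a_{ij})^{\lambda}\right]^{1/\lambda}\right)$ if $b_i\neq0$ and $k=j$, and $\check x_i(j)_k=0$ otherwise. Let $E$ be the set of all maps $e:I\to J$ with $e(i)\in J_i$ for every $i\in I$. For $e\in E$ define $\underline{X}(e)\in[0,1]^n$ by $\underline{X}(e)_k=\max_{i\in I}\check x_i(e(i))_k$ for $k\in J$. *)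

From mathcomp Require Import all_boot all_order all_algebra.
From mathcomp Require Import reals sequences exp.
Set Implicit Arguments. Unset Strict Implicit. Unset Printing Implicit Defensive.
Import Order.TTheory GRing.Theory Num.Theory.
Local Open Scope ring_scope.

Section AA.
Variable R : realType.
Variable lam : R.

Definition TAA (a x : R) : R :=
  if (a == 0) || (x == 0) then 0
  else expR (- (((- ln a) `^ lam + (- ln x) `^ lam) `^ (lam^-1))).

Variables (m n : nat) (A : 'I_m -> 'I_n -> R) (b : 'I_m -> R).

Definition unit_box (x : 'I_n -> R) : Prop := forall j, 0 <= x j <= 1.

(* x in S(A,b): max_j T(a_ij, x_j) = b_i for all i (max of nonnegative values, base 0) *)
Definition sol (x : 'I_n -> R) : Prop :=
  unit_box x /\ forall i, \big[Num.max/0]_(j < n) TAA (A i j) (x j) = b i.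

Definition inJ (i : 'I_m) (j : 'I_n) : bool := b i <= A i j.

Definition rootval (i : 'I_m) (j : 'I_n) : R :=
  expR (- (((- ln (b i)) `^ lam - (- ln (A i j)) `^ lam) `^ (lam^-1))).

Definition xhat (i : 'I_m) (k : 'I_n) : R :=
  if inJ i k then
    (if b i != 0 then rootval i k
     else if 0 < A i k then 0 else 1)
  else 1.

Definition Xbar (k : 'I_n) : R := \big[Num.min/1]_(i < m) xhat i k.

Definition xcheck (i : 'I_m) (j : 'I_n) (k : 'I_n) : R :=
  if (b i != 0) && (k == j) then rootval i j else 0.

Definition in_E (e : 'I_m -> 'I_n) : Prop := forall i, inJ i (e i).

Definition Xlow (e : 'I_m -> 'I_n) (k : 'I_n) : R :=
  \big[Num.max/0]_(i < m) xcheck i (e i) k.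

End AA.

(* The Aczel-Alsina t-norm is generated by [t |-> (- ln t) `^ lam]: on positive
   arguments [TAA a x = g^-1 (g a + g x)] with [g^-1] decreasing.  Hence
   [TAA a x <= b] is equivalent to [x <= g^-1 (g b - g a)] when [b <= a], so
   every solution is bounded above by [Xbar].  Splitting [c = c^+ + c^-], the
   [c^+]-part of the objective is minimised by [Xlow estar] by hypothesis and
   the [c^-]-part by the upper bound [Xbar]; [x*] takes each choice
   coordinatewise. *)
From mathcomp Require Import all_boot all_order all_algebra.
From mathcomp Require Import reals sequences exp.
Import Order.TTheory GRing.Theory Num.Theory.
Set Implicit Arguments. Unset Strict Implicit. Unset Printing Implicit Defensive.
Local Open Scope ring_scope.

Lemma sum_mul_split_sign (R : realDomainType) (n : nat) (c y : 'I_n -> R) :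
  \sum_(j < n) c j * y j =
    \sum_(j < n) Num.max (c j) 0 * y j + \sum_(j < n) Num.min (c j) 0 * y j.
Proof.
by rewrite -big_split; apply: eq_bigr => j _ /=; rewrite -mulrDl addr_max_min addr0.
Qed.

Section AczelAlsinaGenerator.
Variables (R : realType) (lam : R).
Hypothesis lam_gt0 : 0 < lam.

Definition aa_gen (t : R) : R := (- ln t) `^ lam.

Definition aa_gen_inv (s : R) : R := expR (- s `^ lam^-1).

Lemma aa_gen_ge0 t : 0 <= aa_gen t.
Proof. exact: powR_ge0. Qed.

Lemma oppr_ln_ge0 (t : R) : t <= 1 -> 0 <= - ln t.
Proof. by move=> t1; rewrite oppr_ge0 ln_le0. Qed.

Lemma aa_genK t : 0 < t <= 1 -> aa_gen_inv (aa_gen t) = t.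
Proof.
move=> /andP[t0 t1]; rewrite /aa_gen_inv /aa_gen -powRrM mulfV ?gt_eqF //.
by rewrite powRr1 ?oppr_ln_ge0 // opprK lnK.
Qed.

Lemma ler_aa_gen_inv s s' : 0 <= s -> 0 <= s' ->
  (aa_gen_inv s <= aa_gen_inv s') = (s' <= s).
Proof.
move=> s0 s'0; rewrite ler_expR lerN2.
by apply: (le_mono_in (gt0_ltr_powR _)); rewrite ?invr_gt0 ?nnegrE.
Qed.

Lemma aa_gen_le a b : 0 < a <= b -> b <= 1 -> aa_gen b <= aa_gen a.
Proof.
move=> /andP[a0 ab] b1; have a1 := le_trans ab b1.
apply: (ge0_ler_powR (ltW lam_gt0)); rewrite ?nnegrE ?oppr_ln_ge0 //.
by rewrite lerN2 ler_ln ?posrE // (lt_le_trans a0 ab).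
Qed.

Lemma TAA_gen a x : a != 0 -> x != 0 ->
  TAA lam a x = aa_gen_inv (aa_gen a + aa_gen x).
Proof. by move=> /negbTE a0 /negbTE x0; rewrite /TAA a0 x0. Qed.

Lemma TAA_gt0 a x : 0 < a -> 0 < x -> 0 < TAA lam a x.
Proof. by move=> a0 x0; rewrite TAA_gen ?gt_eqF // expR_gt0. Qed.

Lemma TAA_le_iff a b x : 0 < b <= a -> a <= 1 -> 0 < x <= 1 ->
  (TAA lam a x <= b) = (x <= aa_gen_inv (aa_gen b - aa_gen a)).
Proof.
move=> /andP[b0 ba] a1 x01; have a0 := lt_le_trans b0 ba.
have b01 : 0 < b <= 1 by rewrite b0 (le_trans ba a1).
have gba : 0 <= aa_gen b - aa_gen a by rewrite subr_ge0 aa_gen_le // b0.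
rewrite TAA_gen ?gt_eqF ?(andP x01).1 //.
rewrite -[X in (_ <= X) = _](aa_genK b01) -[X in _ = (X <= _)](aa_genK x01).
by rewrite !ler_aa_gen_inv // ?addr_ge0 ?aa_gen_ge0 // lerBlDl.
Qed.

End AczelAlsinaGenerator.

Section SolutionUpperBound.
Variables (R : realType) (lam : R) (m n : nat).
Variables (A : 'I_m -> 'I_n -> R) (b : 'I_m -> R).
Hypothesis lam_gt0 : 0 < lam.
Hypothesis A01 : forall i j, 0 <= A i j <= 1.
Hypothesis b01 : forall i, 0 <= b i <= 1.

Lemma sol_TAA_le x i k : sol lam A b x -> TAA lam (A i k) (x k) <= b i.
Proof. by move=> [_ solx]; rewrite -(solx i) (bigD1 k) //= le_max lexx. Qed.

Lemma sol_le_xhat x i k : sol lam A b x -> x k <= xhat lam A b i k.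
Proof.
move=> solx; have Tik_le := sol_TAA_le i k solx.
have /andP[xk0 xk1] := solx.1 k; have /andP[_ a1] := A01 i k.
have /andP[bi0 _] := b01 i.
rewrite /xhat /inJ; case: ifP => // ba.
case: ifP => [bi_neq0 | /negbFE/eqP bi_eq0].
  have [-> | xk_neq0] := eqVneq (x k) 0; first exact: expR_ge0.
  have x01 : 0 < x k <= 1 by rewrite lt_def xk_neq0 xk0.
  have bpos : 0 < b i <= A i k by rewrite lt_def bi_neq0 bi0.
  by rewrite -(TAA_le_iff lam_gt0 bpos a1 x01).
case: ifP => // Apos; rewrite leNgt; apply/negP => xpos.
by have := TAA_gt0 lam Apos xpos; rewrite ltNge -bi_eq0 Tik_le.
Qed.

Lemma sol_le_Xbar x k : sol lam A b x -> x k <= Xbar lam A b k.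
Proof.
move=> solx; rewrite /Xbar; elim/big_ind: _ => //.
- by have /andP[] := solx.1 k.
- by move=> p q xp xq; rewrite le_min xp xq.
- by move=> i _; apply: sol_le_xhat.
Qed.

End SolutionUpperBound.

Theorem theorem2 (R : realType) (lam : R) (m n : nat)
  (A : 'I_m -> 'I_n -> R) (b : 'I_m -> R) (c : 'I_n -> R) (estar : 'I_m -> 'I_n) :
  0 < lam ->
  (forall i j, 0 <= A i j <= 1) ->
  (forall i, 0 <= b i <= 1) ->
  (exists x, sol lam A b x) ->
  in_E A b estar ->
  sol lam A b (Xlow lam A b estar) ->
  (forall x, sol lam A b x ->
     \sum_(j < n) Num.max (c j) 0 * Xlow lam A b estar j
       <= \sum_(j < n) Num.max (c j) 0 * x j) ->
  let xstar := fun j => if c j < 0 then Xbar lam A b j else Xlow lam A b estar j in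
  forall x, sol lam A b x ->
    \sum_(j < n) c j * xstar j <= \sum_(j < n) c j * x j.
Proof.
move=> lam_gt0 A01 b01 _ _ _ Xlow_min xstar x solx.
rewrite (sum_mul_split_sign c xstar) (sum_mul_split_sign c x).
have -> : \sum_(j < n) Num.max (c j) 0 * xstar j =
          \sum_(j < n) Num.max (c j) 0 * Xlow lam A b estar j.
  apply: eq_bigr => j _; rewrite /xstar.
  by case: ltP; rewrite ?mul0r.
apply: lerD; first exact: Xlow_min.
apply: ler_sum => j _; rewrite /xstar; case: ltP => [cj_lt0 | _]; last by rewrite !mul0r.
by rewrite ler_wnM2l ?(sol_le_Xbar lam_gt0 A01 b01) // ltW.
Qed.
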